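(* Let $\beta\in(1,3/2]$ and let $S_\beta$, $T_\beta$, $L_\beta$ be as in the context. Let $\mathcal{S}$ be the Borel $\sigma$-algebra on $S_\beta$, let $\mu$ be an arbitrary $T_\beta$-invariant probability measure on $(S_\beta,\mathcal{S})$, and let $\psi:S_\beta\to S_\beta$ be $\psi(x,y)=\bigl(x,\ \tfrac{1}{\beta-1}-x-y\bigr)$. Put $\nu=\mu\circ\psi^{-1}$. Then the dynamical systems $(S_\beta,\mathcal{S},\mu,T_\beta)$ and $(S_\beta,\mathcal{S},\nu,L_\beta)$ are isomorphic (in the usual measure-theoretic sense).
   Context: Let $\vec q_0=(0,0)$, $\vec q_1=(1,0)$, $\vec q_2=(0,1)$ and $f_{\vec q_i}(\vec z)=(\vec z+\vec q_i)/\beta$ for $i=0,1,2$. $S_\beta$ denotes the attractor of this IFS (the unique nonempty compact set with $S_\beta=\bigcup_i f_{\vec q_i}(S_\beta)$); for $1<\beta\le 3/2$ it equals the closed triangle with vertices $(0,0)$, $(\frac{1}{\beta-1},0)$, $(0,\frac{1}{\beta-1})$. Define the following subsets of $S_\beta$: $E_0=[0,\frac1\beta)\times[0,\frac1\beta)$; $E_1=\{(x,y):0\le y<\frac1\beta,\ \frac{1}{\beta(\beta-1)}<x+y\le\frac{1}{\beta-1}\}$; $E_2=\{(x,y):0\le x<\frac1\beta,\ \frac{1}{\beta(\beta-1)}<x+y\le\frac{1}{\beta-1}\}$; $C_{01}=\{(x,y):x\ge\frac1\beta,\ 0\le y<\frac1\beta,\ x+y\le\frac{1}{\beta(\beta-1)}\}$;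 $C_{12}=\{(x,y):x\ge\frac1\beta,\ y\ge\frac1\beta,\ \frac{1}{\beta(\beta-1)}<x+y\le\frac{1}{\beta-1}\}$; $C_{02}=\{(x,y):0\le x<\frac1\beta,\ y\ge\frac1\beta,\ x+y\le\frac{1}{\beta(\beta-1)}\}$; $C_{012}=\{(x,y):x\ge\frac1\beta,\ y\ge\frac1\beta,\ x+y\le\frac{1}{\beta(\beta-1)}\}$. The greedy map $T_\beta:S_\beta\to S_\beta$ is $T_\beta(\vec z)=\beta\vec z$ on $E_0$; $\beta\vec z-\vec q_1$ on $C_{01}\cup E_1$; $\beta\vec z-\vec q_2$ on $C_{012}\cup C_{12}\cup C_{02}\cup E_2$. The lazy map $L_\beta:S_\beta\to S_\beta$ is $L_\beta(\vec z)=\beta\vec z$ on $C_{012}\cup C_{01}\cup C_{02}\cup E_0$; $\beta\vec z-\vec q_1$ on $C_{12}\cup E_1$; $\beta\vec z-\vec q_2$ on $E_2$. *)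

(* Points of the plane are pairs (x, y) : R * R,
   with the product sigma-algebra of the Borel sigma-algebras of R
   (= Borel sigma-algebra of R^2). *)
From HB Require Import structures.
From mathcomp Require Import all_boot all_order all_algebra.
From mathcomp Require Import all_classical all_reals all_analysis.
Set Implicit Arguments. Unset Strict Implicit. Unset Printing Implicit Defensive.
Import Order.TTheory GRing.Theory Num.Theory.
Local Open Scope classical_set_scope.
Local Open Scope ring_scope.

Section Defs.
Variable R : realType.
Implicit Types (beta : R) (z : R * R).

Definition inS beta z : bool :=
  [&& 0 <= z.1, 0 <= z.2 & z.1 + z.2 <= (beta - 1)^-1].
Definition Sbeta beta : set (R * R) := [set z | inS beta z].

Definition inE0 beta z : bool := inS beta z && (z.1 < beta^-1) && (z.2 < beta^-1).
Definition inE1 beta z : bool := inS beta z && (0 <= z.2) && (z.2 < beta^-1) &&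
  ((beta * (beta - 1))^-1 < z.1 + z.2) && (z.1 + z.2 <= (beta - 1)^-1).
Definition inE2 beta z : bool := inS beta z && (0 <= z.1) && (z.1 < beta^-1) &&
  ((beta * (beta - 1))^-1 < z.1 + z.2) && (z.1 + z.2 <= (beta - 1)^-1).
Definition inC01 beta z : bool := inS beta z && (beta^-1 <= z.1) && (0 <= z.2) &&
  (z.2 < beta^-1) && (z.1 + z.2 <= (beta * (beta - 1))^-1).
Definition inC12 beta z : bool := inS beta z && (beta^-1 <= z.1) && (beta^-1 <= z.2) &&
  ((beta * (beta - 1))^-1 < z.1 + z.2) && (z.1 + z.2 <= (beta - 1)^-1).
Definition inC02 beta z : bool := inS beta z && (0 <= z.1) && (z.1 < beta^-1) &&
  (beta^-1 <= z.2) && (z.1 + z.2 <= (beta * (beta - 1))^-1).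
Definition inC012 beta z : bool := inS beta z && (beta^-1 <= z.1) && (beta^-1 <= z.2) &&
  (z.1 + z.2 <= (beta * (beta - 1))^-1).

(* f_{q}^{-1}: z |-> beta z - q, with q0 = (0,0), q1 = (1,0), q2 = (0,1) *)
Definition expand0 beta z : R * R := (beta * z.1, beta * z.2).
Definition expand1 beta z : R * R := (beta * z.1 - 1, beta * z.2).
Definition expand2 beta z : R * R := (beta * z.1, beta * z.2 - 1).

(* Greedy map T_beta on S_beta; outside S_beta (a mu-null set) it is
   extended by the identity, an arbitrary convention. *)
Definition Tgreedy beta z : R * R :=
  if inE0 beta z then expand0 beta z
  else if inC01 beta z || inE1 beta z then expand1 beta z
  else if [|| inC012 beta z, inC12 beta z, inC02 beta z | inE2 beta z]
       then expand2 beta z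
  else z.

(* Lazy map L_beta, extended by the identity outside S_beta. *)
Definition Llazy beta z : R * R :=
  if [|| inC012 beta z, inC01 beta z, inC02 beta z | inE0 beta z]
    then expand0 beta z
  else if inC12 beta z || inE1 beta z then expand1 beta z
  else if inE2 beta z then expand2 beta z
  else z.

Definition psi beta z : R * R := (z.1, (beta - 1)^-1 - z.1 - z.2).

End Defs.

(* (X, mu, T) with X = R*R (mu concentrated on S_beta) is a measure-preserving
   system; isomorphism in the usual measure-theoretic sense: there are
   measurable invariant full-measure subsets X0, Y0 of S_beta and a bimeasurable
   bijection phi : X0 -> Y0 (with inverse phi') which is measure preserving and
   conjugates T to L. *)
Definition mp_isomorphic (R : realType) (K : set (R * R))
  (mu : {measure set (R * R) -> \bar R}) (T : R * R -> R * R)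
  (nu : {measure set (R * R) -> \bar R}) (L : R * R -> R * R) : Prop :=
  exists (X0 Y0 : set (R * R)) (phi phi' : R * R -> R * R),
    measurable X0 /\ measurable Y0 /\ X0 `<=` K /\ Y0 `<=` K /\
    mu X0 = 1%E /\ nu Y0 = 1%E /\
    T @` X0 `<=` X0 /\ L @` Y0 `<=` Y0 /\
    measurable_fun setT phi /\ measurable_fun setT phi' /\
    phi @` X0 `<=` Y0 /\ phi' @` Y0 `<=` X0 /\
    (forall x, X0 x -> phi' (phi x) = x) /\
    (forall y, Y0 y -> phi (phi' y) = y) /\
    (forall B, measurable B -> B `<=` Y0 -> mu (X0 `&` phi @^-1` B) = nu B) /\
    (forall x, X0 x -> phi (T x) = L (phi x)).

(* The reflection psi (x, y) = (x, 1/(beta-1) - x - y) is a measurable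
   involution of the triangle S_beta that intertwines the digit maps
   z |-> beta z - q_i, exchanging q_0 and q_2 and fixing q_1.  For
   beta <= 3/2 the square E_0 lies below the line x + y = 1/(beta(beta-1)),
   and then psi carries the region where T_beta uses digit i onto the region
   where L_beta uses the exchanged digit, so psi o T_beta = L_beta o psi.
   Hence psi itself, on the invariant full-measure set S_beta, is the
   isomorphism, nu being the push-forward of mu by psi. *)

From Pilot Require Import Defs.
From HB Require Import structures.
From mathcomp Require Import all_boot all_order all_algebra.
From mathcomp Require Import all_classical all_reals all_analysis.
From mathcomp Require Import ring lra.
Set Implicit Arguments. Unset Strict Implicit. Unset Printing Implicit Defensive.
Import Order.TTheory GRing.Theory Num.Theory.
Local Open Scope classical_set_scope.
Local Open Scope ring_scope.

Lemma mp_isomorphic_involution (R : realType) (K : set (R * R))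
    (mu nu : {measure set (R * R) -> \bar R}) (T L f : R * R -> R * R) :
  measurable K -> mu K = 1%E -> measurable_fun setT f -> involutive f ->
  f @^-1` K = K -> T @` K `<=` K -> (forall z, K z -> f (T z) = L (f z)) ->
  (forall A, measurable A -> nu A = mu (f @^-1` A)) ->
  mp_isomorphic K mu T nu L.
Proof.
move=> mK muK mf fK fKK TK fTL nuE.
have KfE z : K (f z) = K z by rewrite -[in RHS]fKK.
have fK_sub : f @` K `<=` K by move=> _ [z Kz <-]; rewrite KfE.
have LK : L @` K `<=` K.
  move=> _ [z Kz <-]; rewrite -[z]fK -fTL ?KfE ?fK //.
  by apply: TK; exists (f z); rewrite ?KfE.
exists K, K, f, f; do 5 split => //.
split; first by rewrite nuE // fKK.
do 6 split => //.
split; first by move=> x _; rewrite fK.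
split; first by move=> y _; rewrite fK.
split => // B mB BK; rewrite nuE //; congr (mu _).
by apply/setIidr => z /BK; rewrite /= KfE.
Qed.

Lemma measurable_Sbeta (R : realType) (beta : R) : measurable (Sbeta beta).
Proof.
have minS : measurable_fun setT (inS beta).
  apply: measurable_and; last apply: measurable_and;
    apply: measurable_realfun.measurable_fun_ler => //.
  exact: measurable_realfun.measurable_funD measurable_fst measurable_snd.
by rewrite -[Sbeta beta]setTI; exact: minS.
Qed.

Lemma measurable_psi (R : realType) (beta : R) : measurable_fun setT (psi beta).
Proof.
apply: measurable_fun_pair; first exact: measurable_fst.
apply: measurable_realfun.measurable_funB; last exact: measurable_snd.
exact: measurable_realfun.measurable_funB measurable_fst.
Qed.

Section GreedyLazy.
Variables (R : realType) (beta : R).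

Lemma psiK : involutive (psi beta).
Proof. by case=> x y; rewrite /psi /=; congr pair; ring. Qed.

Lemma inS_psi z : inS beta (psi beta z) = inS beta z.
Proof. by rewrite /inS /=; apply/and3P/and3P => -[? ? ?]; split; lra. Qed.

Lemma preimage_psi_Sbeta : psi beta @^-1` Sbeta beta = Sbeta beta.
Proof. by apply/seteqP; split => z; rewrite /Sbeta /= inS_psi. Qed.

Lemma Tgreedy_inS z : inS beta z -> Tgreedy beta z =
  if z.2 < beta^-1 then
    if z.1 < beta^-1 then Defs.expand0 beta z else Defs.expand1 beta z
  else Defs.expand2 beta z.
Proof.
move=> Sz; have /and3P [x_ge0 y_ge0 sum_le] := Sz.
rewrite /Tgreedy /inE0 /inC01 /inE1 /inC012 /inC12 /inC02 /inE2.
rewrite Sz x_ge0 y_ge0 sum_le /= !leNgt.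
by case: (z.1 < _); case: (z.2 < _); case: (_ < z.1 + z.2).
Qed.

Lemma Llazy_inS z : inS beta z -> Llazy beta z =
  if (beta * (beta - 1))^-1 < z.1 + z.2 then
    if z.1 < beta^-1 then
      if z.2 < beta^-1 then Defs.expand0 beta z else Defs.expand2 beta z
    else Defs.expand1 beta z
  else Defs.expand0 beta z.
Proof.
move=> Sz; have /and3P [x_ge0 y_ge0 sum_le] := Sz.
rewrite /Llazy /inE0 /inC01 /inE1 /inC012 /inC12 /inC02 /inE2.
rewrite Sz x_ge0 y_ge0 sum_le /= !leNgt.
by case: (z.1 < _); case: (z.2 < _); case: (_ < z.1 + z.2).
Qed.

Hypothesis beta_gt1 : 1 < beta.

Let beta_neq0 : beta != 0. Proof. by rewrite gt_eqF // (lt_trans ltr01). Qed.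
Let beta1_neq0 : beta - 1 != 0. Proof. by rewrite subr_eq0 gt_eqF. Qed.

Lemma psi_expand0 z :
  psi beta (Defs.expand0 beta z) = Defs.expand2 beta (psi beta z).
Proof. by rewrite /psi /Defs.expand0 /Defs.expand2 /=; congr pair; field. Qed.

Lemma psi_expand1 z :
  psi beta (Defs.expand1 beta z) = Defs.expand1 beta (psi beta z).
Proof. by rewrite /psi /Defs.expand1 /=; congr pair; field. Qed.

Lemma psi_expand2 z :
  psi beta (Defs.expand2 beta z) = Defs.expand0 beta (psi beta z).
Proof. by rewrite /psi /Defs.expand0 /Defs.expand2 /=; congr pair; field. Qed.

Hypothesis beta_le3half : beta <= 3%:R / 2%:R.

Lemma add_le_of_lt_inv x y : x < beta^-1 -> y < beta^-1 ->
  x + y <= (beta * (beta - 1))^-1.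
Proof.
move=> x_lt y_lt.
suff : 2%:R * beta^-1 <= (beta * (beta - 1))^-1 by lra.
have -> : (beta * (beta - 1))^-1 =
          2%:R * beta^-1 + (3%:R - 2%:R * beta) / (beta * (beta - 1)).
  by field; apply/andP.
rewrite lerDl; apply: divr_ge0.
  by rewrite subr_ge0 mulrC -ler_pdivlMr ?ltr0n.
by apply: mulr_ge0; apply: ltW; rewrite ?subr_gt0 // (lt_trans ltr01).
Qed.

Lemma inS_Tgreedy z : inS beta z -> inS beta (Tgreedy beta z).
Proof.
move=> Sz; rewrite Tgreedy_inS //; move: Sz.
case: z => x y /and3P /= [x_ge0 y_ge0 sum_le].
have beta_gt0 : 0 < beta by rewrite (lt_trans ltr01).
have beta_c : beta * (beta - 1)^-1 = (beta - 1)^-1 + 1 by field.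
have bx_ge0 : 0 <= beta * x by rewrite mulr_ge0 // ltW.
have by_ge0 : 0 <= beta * y by rewrite mulr_ge0 // ltW.
have bsum_le : beta * x + beta * y <= beta * (beta - 1)^-1.
  by rewrite -mulrDr ler_pM2l.
have bsum_le0 : x < beta^-1 -> y < beta^-1 ->
    beta * x + beta * y <= (beta - 1)^-1.
  move=> x_lt y_lt; rewrite -mulrDr.
  have -> : (beta - 1)^-1 = beta * (beta * (beta - 1))^-1 by field; apply/andP.
  by rewrite ler_pM2l // add_le_of_lt_inv.
have ge_inv t : beta^-1 <= t -> 1 <= beta * t.
  by move=> ?; rewrite -(mulfV beta_neq0) ler_pM2l.
rewrite /inS /Defs.expand0 /Defs.expand1 /Defs.expand2.
case: ltP => [y_lt|/ge_inv ?]; [case: ltP => [x_lt|/ge_inv ?]|];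
  [have := bsum_le0 x_lt y_lt => ?| |]; apply/and3P; split => /=; lra.
Qed.

Lemma psi_Tgreedy z : psi beta (Tgreedy beta z) = Llazy beta (psi beta z).
Proof.
have [Sz|notSz] := boolP (inS beta z); last first.
  have notSpz : inS beta (psi beta z) = false by rewrite inS_psi; exact/negbTE.
  rewrite /Tgreedy /Llazy /inE0 /inC01 /inE1 /inC012 /inC12 /inC02 /inE2.
  by rewrite (negbTE notSz) notSpz.
have d_eq : (beta * (beta - 1))^-1 = (beta - 1)^-1 - beta^-1.
  by field; apply/andP.
have psi_sum_gt : ((beta * (beta - 1))^-1 < (psi beta z).1 + (psi beta z).2) =
                  (z.2 < beta^-1).
  by rewrite /= d_eq; apply/idP/idP; lra.
have psi2_lt :
    ((psi beta z).2 < beta^-1) = ((beta * (beta - 1))^-1 < z.1 + z.2).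
  by rewrite /= d_eq; apply/idP/idP; lra.
rewrite Tgreedy_inS // Llazy_inS ?inS_psi // psi_sum_gt psi2_lt /=.
case: ltP => [y_lt|_]; last exact: psi_expand2.
case: ltP => [x_lt|_]; last exact: psi_expand1.
by rewrite ltNge add_le_of_lt_inv //= psi_expand0.
Qed.

End GreedyLazy.

Theorem theorem3p2 (R : realType) (beta : R)
  (hb1 : 1 < beta) (hb2 : beta <= 3%:R / 2%:R)
  (mu : probability (R * R)%type R)
  (hmuS : mu (Sbeta beta) = 1%E)
  (hinv : forall A : set (R * R), measurable A ->
            mu (Tgreedy beta @^-1` A) = mu A)
  (nu : probability (R * R)%type R)
  (hnu : forall A : set (R * R), measurable A ->
            nu A = mu (psi beta @^-1` A)) :
  mp_isomorphic (Sbeta beta) mu (Tgreedy beta) nu (Llazy beta).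
Proof.
apply: (mp_isomorphic_involution (measurable_Sbeta beta) hmuS
         (measurable_psi beta) (psiK beta) (preimage_psi_Sbeta beta) _ _ hnu).
- by move=> _ [z Sz <-]; exact: inS_Tgreedy.
- by move=> z _; exact: psi_Tgreedy.
Qed.
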